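(* Let $k\ge 3$ be an integer and let $\Gamma$ be any graph in the family $M_{0,1,2,\ldots,k-1}$ (defined in the context). Then $\Gamma$ has a Fulkerson-cover.
   Context: All graphs are finite. A Fulkerson-cover of a cubic graph is a collection of six perfect matchings such that every edge belongs to exactly two of them. A cubic graph is cyclically 4-edge-connected if at least 4 edges must be removed to disconnect it into two components each containing a circuit. The family $M_{0,1,\ldots,k-1}$ ($k\ge 2$): Let $G_0,G_1,\ldots,G_{k-1}$ be bridgeless, cyclically 4-edge-connected cubic graphs, each having a Fulkerson-cover. In each $G_i$ choose an edge $x_iy_i$, let $x_i^0,x_i^1$ be the two neighbours of $x_i$ other than $y_i$, let $y_i^0,y_i^1$ be the two neighbours of $y_i$ other than $x_i$, and let $H_i=G_i\setminus\{x_i,y_i\}$ (delete the two vertices and their incident edges). The graph $\{G;G_0,\ldots,G_{k-1}\}$ is obtained from the disjoint union of $H_0,\ldots,H_{k-1}$ by adding new vertices $a_j,b_j,c_j$ for $0\le j\le k-1$ and $v_0,\ldots,v_{k-3}$ (none if $k=2$), and the following edges, with indices of $x$ taken modulo $k$: - for each $0\le j\le k-1$: $a_jy_j^0$, $a_jx_{j+1}^0$, $b_jy_j^1$, $b_jx_{j+1}^1$, $a_jc_j$, $b_jc_j$; - the edges of the path $c_1v_0v_1\cdots v_{k-3}c_0$ (for $k=2$ this is the single edge $c_0c_1$); - for each $2\le i\le k-1$: the edge $c_iv_{i-2}$. (Equivalently, it is built recursively: for $k=2$ take the graph above with edge $c_0c_1$; for $i=3,\ldots,k$, add $H_{i-1}$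 and $a_{i-1},b_{i-1},c_{i-1}$, subdivide the edge at $c_0$ not of the form $a_0c_0,b_0c_0$ by a new vertex $v_{i-3}$, join $c_{i-1}$ to $a_{i-1},b_{i-1},v_{i-3}$, make $a_{i-1}$ adjacent to $x_0^0,y_{i-1}^0$, $b_{i-1}$ adjacent to $x_0^1,y_{i-1}^1$, and replace the edges $a_{i-2}x_0^0$, $b_{i-2}x_0^1$ by $a_{i-2}x_{i-1}^0$, $b_{i-2}x_{i-1}^1$.) $M_{0,1,\ldots,k-1}$ denotes the set of all graphs obtained this way, over all such choices of $G_i$, edges $x_iy_i$ and labelings of neighbours. *)

From mathcomp Require Import all_boot.
Set Implicit Arguments.
Unset Strict Implicit.
Unset Printing Implicit Defensive.

Definition simple_graph (T : finType) (e : rel T) : Prop :=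
  symmetric e /\ irreflexive e.

Definition edges (T : finType) (e : rel T) : {set {set T}} :=
  [set E : {set T} | [exists u : T, exists v : T, e u v && (E == [set u; v])]].

Definition cubic (T : finType) (e : rel T) : Prop :=
  forall v : T, #|[set w | e v w]| = 3.

Definition perfect_matching (T : finType) (e : rel T) (M : {set {set T}}) : bool :=
  (M \subset edges e) && [forall v : T, #|[set E in M | v \in E]| == 1].

Definition fulkerson_cover (T : finType) (e : rel T) (M : 'I_6 -> {set {set T}}) : Prop :=
  (forall i, perfect_matching e (M i)) /\
  (forall E, E \in edges e -> #|[set i | E \in M i]| = 2).

Definition has_fulkerson_cover (T : finType) (e : rel T) : Prop :=
  exists M : 'I_6 -> {set {set T}}, fulkerson_cover e M.

Definition bridge (T : finType) (e : rel T) (u v : T) : bool :=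
  e u v && ~~ connect (fun a b => e a b && ([set a; b] != [set u; v])) u v.

Definition bridgeless (T : finType) (e : rel T) : Prop :=
  forall u v : T, ~~ bridge e u v.

Definition has_circuit (T : finType) (e : rel T) (S : {set T}) : Prop :=
  exists c : seq T, [/\ 3 <= size c, uniq c, all (fun v => v \in S) c & cycle e c].

Definition edge_cut (T : finType) (e : rel T) (S : {set T}) : {set {set T}} :=
  [set E in edges e | (E :&: S != set0) && (E :\: S != set0)].

Definition cyclically_4_edge_connected (T : finType) (e : rel T) : Prop :=
  forall S : {set T}, has_circuit e S -> has_circuit e (~: S) -> 4 <= #|edge_cut e S|.

(* Vertices of H_i = G_i \ {x_i, y_i}, all i together. *)
Definition Hpred (k : nat) (V : 'I_k -> finType) (x y : forall i, V i)
  (v : {i : 'I_k & V i}) : bool :=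
  (tagged v != x (tag v)) && (tagged v != y (tag v)).

Definition Hvert (k : nat) (V : 'I_k -> finType) (x y : forall i, V i) : finType :=
  {v : {i : 'I_k & V i} | Hpred x y v}.

(* Vertex type of the constructed graph:
     inl (inl h)      : vertex h of some H_i,
     inl (inr (j, 0)) : a_j,  inl (inr (j, 1)) : b_j,  inl (inr (j, 2)) : c_j,
     inr m            : v_m  (0 <= m <= k-3). *)
Definition Mvert (k : nat) (V : 'I_k -> finType) (x y : forall i, V i) : finType :=
  ((Hvert x y + ('I_k * 'I_3)) + 'I_(k - 2))%type.

Definition Mbase (k : nat) (V : 'I_k -> finType) (g : forall i, rel (V i))
  (x y x0 x1 y0 y1 : forall i, V i) (u w : Mvert x y) : bool :=
  match u, w with
  | inl (inl h), inl (inl h') =>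
      (tag (val h) == tag (val h')) &&
      g (tag (val h)) (tagged (val h)) (tagged_as (val h) (val h'))
  | inl (inl h), inl (inr (j, t)) =>
      (* a_j y_j^0, a_j x_{j+1}^0, b_j y_j^1, b_j x_{j+1}^1 *)
      ((t == 0 :> nat) &&
         ((val h == Tagged V (y0 j)) || (val h == Tagged V (x0 (ordS j))))) ||
      ((t == 1 :> nat) &&
         ((val h == Tagged V (y1 j)) || (val h == Tagged V (x1 (ordS j)))))
  | inl (inr (j, t)), inl (inr (j', t')) =>
      (* a_j c_j, b_j c_j, and (only when k = 2) c_0 c_1 *)
      ((j == j') && (t == 0 :> nat) && (t' == 2 :> nat)) ||
      ((j == j') && (t == 1 :> nat) && (t' == 2 :> nat)) ||
      [&& k == 2, t == 2 :> nat, t' == 2 :> nat & j != j']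
  | inl (inr (j, t)), inr m =>
      (* c_1 v_0, v_{k-3} c_0, and c_i v_{i-2} for 2 <= i <= k-1 *)
      (t == 2 :> nat) &&
      [|| (j == 1 :> nat) && (m == 0 :> nat),
          (j == 0 :> nat) && (m == k - 3 :> nat)
        | (2 <= j) && (m == j - 2 :> nat)]
  | inr m, inr m' =>
      (m.+1 == m' :> nat)
  | _, _ => false
  end.

Definition Mgraph (k : nat) (V : 'I_k -> finType) (g : forall i, rel (V i))
  (x y x0 x1 y0 y1 : forall i, V i) : rel (Mvert x y) :=
  fun u w => Mbase g x0 x1 y0 y1 u w || Mbase g x0 x1 y0 y1 w u.
Arguments Mgraph {k V} g x y x0 x1 y0 y1 _ _.

(* A Fulkerson cover is the same as six involutions of the vertex set moving
   every vertex along an edge, each edge being used by exactly two of them.  In a cover of G_i,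
   each of the six matchings either contains x_i y_i (exactly two do) or has a type (α, β):
   it matches x_i with x_i^α and y_i with y_i^β; the types (0,0), (0,1), (1,0), (1,1) occur
   a, 2-a, 2-a, a times.  We relabel the six matchings of every G_i so that the two using
   x_i y_i form a prescribed colour class, and so that at each gadget a_j b_j c_j the sides
   used by H_j at y_j and by H_(j+1) at x_(j+1) always differ.  Each matching of the new graph
   then follows G_i inside H_i, sends a_j and b_j to these sides or to c_j, and matches the
   remaining c_j's inside the tree on the c's and v's by a proper 3-edge-colouring.  The
   relabellings exist by a finite check of local patterns; the only global constraint, an
   orientation parity around the cycle, disappears at the gadget where the colour classes of
   the two neighbouring edges x_i y_i differ. *)

From mathcomp Require Import all_boot perm zify.
Set Implicit Arguments. Unset Strict Implicit. Unset Printing Implicit Defensive.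

(** * Fulkerson covers as families of involutions *)

Section MatchingsAsInvolutions.
Variables (T : finType) (e : rel T).
Hypotheses (e_sym : symmetric e) (e_irr : irreflexive e).
Implicit Types (u v w : T) (p : T -> T) (M : {set {set T}}).

Lemma edge_neq u w : e u w -> u != w.
Proof. by apply: contraTneq => ->; rewrite e_irr. Qed.

Lemma mem_edges u w : e u w -> [set u; w] \in edges e.
Proof.
by move=> euw; rewrite inE; apply/existsP; exists u; apply/existsP; exists w; rewrite euw eqxx.
Qed.

Lemma edgesP E : E \in edges e -> exists u w, e u w /\ E = [set u; w].
Proof. by rewrite inE => /existsP[u /existsP[w /andP[euw /eqP->]]]; exists u, w. Qed.

Definition matching_of p : {set {set T}} := [set [set v; p v] | v : T].

Lemma mem_matching_of p u w : involutive p -> u != w ->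
  ([set u; w] \in matching_of p) = (p u == w).
Proof.
move=> p_inv uw; apply/imsetP/eqP => [[v _ E]|<-]; last by exists u.
have pairE : [set v; p v] = [set u; p u].
  have : u \in [set v; p v] by rewrite -E set21.
  by case/set2P => ->; rewrite // p_inv setUC.
have : w \in [set u; p u] by rewrite -pairE -E set22.
by case/set2P => // wu; rewrite wu eqxx in uw.
Qed.

Lemma matching_of_perfect p : involutive p -> (forall v, e v (p v)) ->
  perfect_matching e (matching_of p).
Proof.
move=> p_inv p_adj; apply/andP; split.
  by apply/subsetP => E /imsetP[v _ ->]; apply: mem_edges.
apply/forallP => v; apply/cards1P; exists [set v; p v].
apply/setP => E; rewrite !inE; apply/andP/eqP => [[/imsetP[w _ ->]]|->].
  by case/set2P => ->; rewrite // p_inv setUC.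
by split; [apply: imset_f | rewrite set21].
Qed.

Definition partner M v : T := odflt v [pick w | e v w && ([set v; w] \in M)].

Section PerfectMatching.
Variable M : {set {set T}}.
Hypothesis M_perfect : perfect_matching e M.

Lemma perfect_matching_uniq v w w' : v != w ->
  [set v; w] \in M -> [set v; w'] \in M -> w' = w.
Proof.
case/andP: M_perfect => _ /forallP/(_ v)/cards1P[E ME] vw vwM vw'M.
have atv F : F \in M -> v \in F -> F = E.
  by move=> FM vF; apply/set1P; rewrite -ME inE FM.
have : w \in [set v; w'] by rewrite (atv _ vw'M (set21 _ _)) -(atv _ vwM (set21 _ _)) set22.
by case/set2P => [wv|//]; rewrite wv eqxx in vw.
Qed.

Lemma partner_spec v : e v (partner M v) /\ [set v; partner M v] \in M.
Proof.
rewrite /partner; case: pickP => [w /andP[] //|none].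
case/andP: M_perfect => M_edges /forallP/(_ v)/cards1P[E ME].
have /setIdP[EM vE] : E \in [set F in M | v \in F] by rewrite ME set11.
have [u [w [euw Euw]]] := edgesP (subsetP M_edges _ EM).
move: vE; rewrite Euw => /set2P[vu|vw]; subst v.
  by have := none w; rewrite euw -Euw EM.
by have := none u; rewrite e_sym euw setUC -Euw EM.
Qed.

Lemma partner_adj v : e v (partner M v).
Proof. by case: (partner_spec v). Qed.

Lemma mem_perfect_matching u w : u != w -> ([set u; w] \in M) = (partner M u == w).
Proof.
move=> uw; apply/idP/eqP => [uwM|<-]; last by case: (partner_spec u).
have [/edge_neq upu upuM] := partner_spec u.
by rewrite (perfect_matching_uniq upu upuM uwM).
Qed.

Lemma partner_involutive : involutive (partner M).
Proof.
move=> v; have [/edge_neq vpv vpvM] := partner_spec v.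
by apply/eqP; rewrite -mem_perfect_matching 1?eq_sym // setUC.
Qed.
End PerfectMatching.

Definition involution_cover (P : 'I_6 -> T -> T) : Prop :=
  [/\ forall m, involutive (P m), forall m v, e v (P m v)
    & forall u w, e u w -> #|[set m | P m u == w]| = 2].

Lemma has_fulkerson_coverP :
  has_fulkerson_cover e <-> exists P, involution_cover P.
Proof.
split=> [[M [M_perfect M_twice]]|[P [P_inv P_adj P_twice]]].
  exists (fun m => partner (M m)); split=> [m|m v|u w euw].
  - exact: partner_involutive.
  - exact: partner_adj.
  apply: etrans (M_twice _ (mem_edges euw)); apply: eq_card => m.
  by rewrite !inE mem_perfect_matching // edge_neq.
exists (fun m => matching_of (P m)); split=> [m|E /edgesP[u [w [euw ->]]]].
  exact: matching_of_perfect.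
apply: etrans (P_twice _ _ euw); apply: eq_card => m.
by rewrite !inE mem_matching_of // edge_neq.
Qed.

Lemma involution_cover_perm P (s : {perm 'I_6}) :
  involution_cover P -> involution_cover (fun m => P (s m)).
Proof.
case=> P_inv P_adj P_twice; split=> // u w euw.
apply: etrans (P_twice _ _ euw); rewrite -(card_preimset [set m | P m u == w] (@perm_inj _ s)).
by apply: eq_card => m; rewrite !inE.
Qed.
End MatchingsAsInvolutions.

Lemma card_set_count (I : finType) (Q : pred I) : #|[set i | Q i]| = count Q (enum I).
Proof. by rewrite cardsE cardE [in LHS]/enum_mem size_filter -enumT. Qed.

Lemma perm_of_fibres n (X : eqType) (f g : 'I_n -> X) :
  (forall t, #|[set i | f i == t]| = #|[set i | g i == t]|) ->
  exists s : 'S_n, forall i, f (s i) = g i.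
Proof.
move=> fibres; have : perm_eq (map g (enum 'I_n)) [tuple f i | i < n].
  by apply/allP => t _; rewrite /= !count_map -!enumT -!card_set_count; apply/eqP/esym/fibres.
case/tuple_permP => s gf; exists s => i.
have := congr1 (fun t : seq X => nth (g i) t i) gf.
rewrite /= (nth_map i) ?size_enum_ord // nth_ord_enum.
by rewrite (nth_map i) ?size_enum_ord // nth_ord_enum tnth_mktuple.
Qed.

(** * Matchings at a labelled edge *)

(* [None]: the matching contains the edge xy; [Some (α, β)]: it matches x with x^α and
   y with y^β. *)
Definition edge_type := option (bool * bool).

Definition x_side (t : edge_type) b := if t is Some (α, _) then α == b else false.
Definition y_side (t : edge_type) b := if t is Some (_, β) then β == b else false.

Definition type_mult (t : edge_type) (a : nat) : nat :=
  if t is Some (α, β) then (if α == β then a else 2 - a) else 2.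

Definition labelled_edge (T : finType) (e : rel T) (x y x0 x1 y0 y1 : T) : Prop :=
  [/\ symmetric e, irreflexive e,
      forall w, e x w = (w \in [:: y; x0; x1]), forall w, e y w = (w \in [:: x; y0; y1])
    & uniq [:: y; x0; x1] && uniq [:: x; y0; y1]].

Lemma uniq_of_card3 (T : finType) (u v w : T) : #|[set u; v; w]| = 3 -> uniq [:: u; v; w].
Proof.
move=> card3; apply/card_uniqP; rewrite [size _]/= -card3.
by apply: eq_card => z; rewrite !inE orbA.
Qed.

Lemma labelled_edge_of (T : finType) (e : rel T) (x y x0 x1 y0 y1 : T) :
  simple_graph e -> cubic e ->
  [set w | e x w] = [set y; x0; x1] -> [set w | e y w] = [set x; y0; y1] ->
  labelled_edge e x y x0 x1 y0 y1.
Proof.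
move=> [e_sym e_irr] e_cubic Nx Ny; split=> // [w|w|].
- by rewrite -[e x w](in_set (fun w => e x w)) Nx !inE orbA.
- by rewrite -[e y w](in_set (fun w => e y w)) Ny !inE orbA.
by rewrite !uniq_of_card3 // -?Nx -?Ny e_cubic.
Qed.

Section LabelledEdge.
Variables (T : finType) (e : rel T) (x y x0 x1 y0 y1 : T).
Hypothesis xy_lab : labelled_edge e x y x0 x1 y0 y1.
Implicit Types (b : bool) (w : T) (f : T -> T).

Definition xn b := if b then x1 else x0.
Definition yn b := if b then y1 else y0.

Lemma labelled_edge_sym : symmetric e. Proof. by case: xy_lab. Qed.

Lemma labelled_edge_irr : irreflexive e. Proof. by case: xy_lab. Qed.

Lemma adj_x w : e x w = [|| w == y, w == x0 | w == x1].
Proof. by case: xy_lab => _ _ -> *; rewrite !inE. Qed.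

Lemma adj_y w : e y w = [|| w == x, w == y0 | w == y1].
Proof. by case: xy_lab => _ _ _ -> *; rewrite !inE. Qed.

Lemma adj_xy : e x y. Proof. by rewrite adj_x eqxx. Qed.

Lemma x_neq_y : x != y.
Proof. by apply: contraTneq adj_xy => ->; rewrite labelled_edge_irr. Qed.

Lemma adj_xn b : e x (xn b). Proof. by rewrite adj_x; case: b; rewrite eqxx ?orbT. Qed.

Lemma adj_yn b : e y (yn b). Proof. by rewrite adj_y; case: b; rewrite eqxx ?orbT. Qed.

Lemma xn_neq_x b : xn b != x.
Proof. by apply: contraTneq (adj_xn b) => ->; rewrite labelled_edge_irr. Qed.

Lemma yn_neq_y b : yn b != y.
Proof. by apply: contraTneq (adj_yn b) => ->; rewrite labelled_edge_irr. Qed.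

Lemma xn_neq_y b : xn b != y.
Proof.
case: xy_lab => _ _ _ _ /andP[/and3P[+ _ _] _]; rewrite !inE negb_or.
by case: b => /andP[? ?]; rewrite eq_sym.
Qed.

Lemma yn_neq_x b : yn b != x.
Proof.
case: xy_lab => _ _ _ _ /andP[_ /and3P[+ _ _]]; rewrite !inE negb_or.
by case: b => /andP[? ?]; rewrite eq_sym.
Qed.

Lemma xn_x1 b : (xn b == x1) = b.
Proof.
case: xy_lab => _ _ _ _ /andP[/and3P[_ + _] _]; rewrite !inE => /negbTE x01.
by case: b; rewrite /= ?eqxx.
Qed.

Lemma yn_y1 b : (yn b == y1) = b.
Proof.
case: xy_lab => _ _ _ _ /andP[_ /and3P[_ + _]]; rewrite !inE => /negbTE y01.
by case: b; rewrite /= ?eqxx.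
Qed.

Lemma xn_inj : injective xn.
Proof. by move=> b b' /(congr1 (eq_op^~ x1)); rewrite !xn_x1. Qed.

Lemma yn_inj : injective yn.
Proof. by move=> b b' /(congr1 (eq_op^~ y1)); rewrite !yn_y1. Qed.

Lemma adj_xP w : e x w -> w != y -> exists b, w = xn b.
Proof.
rewrite adj_x => /or3P[/eqP->|/eqP->|/eqP->]; rewrite ?eqxx //.
  by exists false.
by exists true.
Qed.

Lemma adj_yP w : e y w -> w != x -> exists b, w = yn b.
Proof.
rewrite adj_y => /or3P[/eqP->|/eqP->|/eqP->]; rewrite ?eqxx //.
  by exists false.
by exists true.
Qed.

Definition type_at f : edge_type :=
  if f x == y then None else Some (f x == x1, f y == y1).

Section OneMatching.
Variable f : T -> T.
Hypotheses (f_inv : involutive f) (f_adj : forall w, e w (f w)).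

Lemma type_at_None : (type_at f == None) = (f x == y).
Proof. by rewrite /type_at; case: (f x == y). Qed.

Lemma x_side_type_at b : x_side (type_at f) b = (f x == xn b).
Proof.
rewrite /type_at; case: eqP => [->|fxy]; first by rewrite eq_sym (negbTE (xn_neq_y b)).
have [b' ->] := adj_xP (f_adj x) (introN eqP fxy).
by rewrite /= (inj_eq xn_inj) xn_x1.
Qed.

Lemma y_side_type_at b : y_side (type_at f) b = (f y == yn b).
Proof.
rewrite /type_at; case: eqP => [<-|fxy]; first by rewrite f_inv eq_sym (negbTE (yn_neq_x b)).
have fyx : f y != x by apply/eqP => fyx; apply: fxy; rewrite -fyx f_inv.
have [b' ->] := adj_yP (f_adj y) fyx.
by rewrite /= (inj_eq yn_inj) yn_y1.
Qed.
End OneMatching.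

Section CoverAtEdge.
Variable P : 'I_6 -> T -> T.
Hypothesis P_cover : involution_cover e P.

Definition mult00 := #|[set m | type_at (P m) == Some (false, false)]|.

Lemma card_type_at t : #|[set m | type_at (P m) == t]| = type_mult t mult00 /\ mult00 <= 2.
Proof.
case: P_cover => P_inv P_adj P_twice.
have card_x b : #|[set m | x_side (type_at (P m)) b]| = 2.
  by apply: etrans _ (P_twice _ _ (adj_xn b)); apply: eq_card => m; rewrite !inE x_side_type_at.
have card_y b : #|[set m | y_side (type_at (P m)) b]| = 2.
  by apply: etrans _ (P_twice _ _ (adj_yn b)); apply: eq_card => m; rewrite !inE y_side_type_at.
have card_None : #|[set m | type_at (P m) == None]| = 2.
  by apply: etrans _ (P_twice _ _ adj_xy); apply: eq_card => m; rewrite !inE type_at_None.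
have split_x b : #|[set m | x_side (type_at (P m)) b]| =
    #|[set m | type_at (P m) == Some (b, false)]| + #|[set m | type_at (P m) == Some (b, true)]|.
  rewrite -(cardsID [set m | y_side (type_at (P m)) false]); congr (_ + _); apply: eq_card => m;
  by rewrite !inE; case: (type_at (P m)) => [[[] []]|]; case: b.
have split_y b : #|[set m | y_side (type_at (P m)) b]| =
    #|[set m | type_at (P m) == Some (false, b)]| + #|[set m | type_at (P m) == Some (true, b)]|.
  rewrite -(cardsID [set m | x_side (type_at (P m)) false]); congr (_ + _); apply: eq_card => m;
  by rewrite !inE; case: (type_at (P m)) => [[[] []]|]; case: b.
move: (split_x false) (split_x true) (split_y false) (split_y true).
rewrite !card_x !card_y /mult00.
case: t => [[[] []]|] /=; rewrite ?card_None; lia.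
Qed.
End CoverAtEdge.
End LabelledEdge.

(** * Local patterns *)

(* The type prescribed for the global matching m, of colour class m %/ 2, at an edge x_i y_i of
   class c whose neighbours x_(i-1) y_(i-1) and x_(i+1) y_(i+1) have classes cp and cn, where a
   is the multiplicity of type (0,0) and op, oc are the orientations of the gadgets i-1 and i. *)
Definition local_pattern (cp c cn a : nat) (op oc : bool) (m : nat) : edge_type :=
  let cl := m %/ 2 in let b := odd m in
  if cl == c then None
  else if cp != cn then
    (if cl == cn then Some (~~ (op (+) b), ~~ (op (+) b) (+) (a == 0))
     else Some ((oc (+) b) (+) (a != 2), oc (+) b))
  else if cl == cp then Some (b, b (+) ((a == 0) || ((a == 1) && (~~ op == oc))))
  else Some (~~ (op (+) b), oc (+) b).

Definition local_pattern_ok cp c cn a op oc : bool :=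
  let pat := local_pattern cp c cn a op oc in
  [&& all (fun m => (pat m == None) == (m %/ 2 == c)) (iota 0 6),
      all (fun m => (m %/ 2 != c) ==> (m %/ 2 != cn) ==> y_side (pat m) (oc (+) odd m)) (iota 0 6),
      all (fun m => (m %/ 2 != c) ==> (m %/ 2 != cp) ==> x_side (pat m) (~~ (op (+) odd m)))
        (iota 0 6) &
      all (fun t => count (fun m => pat m == t) (iota 0 6) == type_mult t a)
        [:: None; Some (false, false); Some (false, true); Some (true, false); Some (true, true)]].

(* When cp = cn, both sides of the two matchings of the third class are forced, to the types
   (~~ op (+) b, oc (+) b) for b = 0, 1: these are (0,0) and (1,1) if oc = ~~ op, which needs
   a >= 1, and (0,1) and (1,0) if oc = op, which needs a <= 1. *)
Lemma local_pattern_okP cp c cn a op oc :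
  cp < 3 -> c < 3 -> cn < 3 -> a < 3 -> cp != c -> cn != c ->
  (cp == cn -> (a == 2 -> oc = ~~ op) /\ (a == 0 -> oc = op)) ->
  local_pattern_ok cp c cn a op oc.
Proof.
have all_cases : all (fun cp => all (fun c => all (fun cn => all (fun a =>
    all (fun op => all (fun oc =>
      (cp != c) ==> (cn != c) ==>
      ((cp == cn) ==> ((a == 2) ==> (oc == ~~ op)) && ((a == 0) ==> (oc == op))) ==>
      local_pattern_ok cp c cn a op oc) [:: true; false]) [:: true; false])
    (iota 0 3)) (iota 0 3)) (iota 0 3)) (iota 0 3) by vm_compute.
have mem3 z : z < 3 -> z \in iota 0 3 by rewrite mem_iota.
have mem_bool (b : bool) : b \in [:: true; false] by case: b.
move=> /mem3 cp3 /mem3 c3 /mem3 cn3 /mem3 a3 cpc cnc compat.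
move/allP/(_ _ cp3)/allP/(_ _ c3)/allP/(_ _ cn3)/allP/(_ _ a3)/allP/(_ _ (mem_bool op))
  /allP/(_ _ (mem_bool oc)): all_cases.
rewrite cpc cnc /= => /implyP; apply; apply/implyP => /compat[a2 a0].
by apply/andP; split; [apply/implyP => /a2 -> | apply/implyP => /a0 ->].
Qed.

(** * The cycle of gadgets *)

Lemma val_ordS n (i : 'I_n) : (ordS i : nat) = if i.+1 == n then 0 else i.+1.
Proof.
rewrite /ordS /=; case: eqP => [->|ne]; first by rewrite modnn.
by rewrite modn_small //; have := ltn_ord i; lia.
Qed.

Lemma val_ord_pred n (i : 'I_n) : (ord_pred i : nat) = if i == 0 :> nat then n.-1 else i.-1.
Proof.
have n_gt0 : 0 < n by have := ltn_ord i; lia.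
rewrite /ord_pred /=; case: eqP => [->|ne]; first by rewrite add0n modn_small // ltn_predL.
have -> : (i + n).-1 = i.-1 + n by lia.
by rewrite modnDr modn_small //; have := ltn_ord i; lia.
Qed.

Lemma ord_pred_neq n (i : 'I_n.+2) : ord_pred i != i.
Proof.
apply/eqP => /(congr1 (@nat_of_ord _)); rewrite val_ord_pred.
by case: (nat_of_ord i =P 0) => [->|] /=; lia.
Qed.

Lemma ordS_neq n (i : 'I_n.+2) : ordS i != i.
Proof. by apply/eqP => iSi; move: (ord_pred_neq (ordS i)); rewrite ordSK iSi eqxx. Qed.

Section Cycle.
Variables (n : nat) (a : 'I_n.+3 -> nat).
Hypothesis a_lt3 : forall i, a i < 3.
Local Notation k := n.+3.

(* The global matchings 2c and 2c+1 form colour class c.  The edge x_i y_i is used exactly in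
   class [xy_class i]; consecutive classes differ, and the class 2 of i = 1 makes
   xy_class (i - 1) = xy_class (i + 1) impossible at i = 0, so that the orientation constraints
   around the cycle can all be met. *)
Definition xy_class (i : nat) : nat :=
  if i == 1 then 2 else if i == 0 then (if odd k then 0 else 1) else if odd i then 0 else 1.

Lemma xy_class_lt3 i : xy_class i < 3.
Proof. by rewrite /xy_class; case: (i == 1) => //; case: (i == 0); case: (odd _). Qed.

Lemma xy_class_ge2 i : 2 <= i -> xy_class i = (if odd i then 0 else 1).
Proof. by case: i => [|[|i]]. Qed.

Lemma xy_class0 : xy_class 0 = if odd n then 1 else 0.
Proof. by rewrite /xy_class /=; case: (odd n). Qed.

Lemma xy_class1 : xy_class 1 = 2. Proof. by []. Qed.

Lemma xy_class_next (i : 'I_k) : xy_class i != xy_class (ordS i).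
Proof.
rewrite val_ordS; case: i => [[|[|i]] hi] /=; rewrite ?xy_class0 ?xy_class1.
- by case: (odd n).
- by [].
case: (i.+3 =P k) => [[->]|_]; first by rewrite xy_class_ge2 // xy_class0 /=; case: (odd n).
by rewrite !xy_class_ge2 //=; case: (odd i).
Qed.

Lemma xy_class_prev (i : 'I_k) : xy_class (ord_pred i) != xy_class i.
Proof. by have := xy_class_next (ord_pred i); rewrite ord_predK. Qed.

Fixpoint orient (j : nat) : bool :=
  if j is j'.+1 then orient j' (+) (a (inord j) == 2) else false.

Definition pattern (i : 'I_k) (m : 'I_6) : edge_type :=
  local_pattern (xy_class (ord_pred i)) (xy_class i) (xy_class (ordS i)) (a i)
    (orient (ord_pred i)) (orient i) m.

Lemma pattern_ok (i : 'I_k) :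
  local_pattern_ok (xy_class (ord_pred i)) (xy_class i) (xy_class (ordS i)) (a i)
    (orient (ord_pred i)) (orient i).
Proof.
apply: local_pattern_okP; rewrite ?xy_class_lt3 ?a_lt3 ?xy_class_prev 1?eq_sym ?xy_class_next //.
rewrite val_ord_pred val_ordS; case: i => [[|i] hi] /=.
  by rewrite xy_class1 xy_class_ge2 //; case: (odd _).
have -> : inord i.+1 = Ordinal hi by apply: val_inj; rewrite /= inordK.
by move=> _; split=> /eqP ->; rewrite ?addbT ?addbF.
Qed.

Implicit Types (i j : 'I_k) (m : 'I_6).

Lemma mem_iota6 (m : 'I_6) : (m : nat) \in iota 0 6. Proof. by rewrite mem_iota ltn_ord. Qed.

Lemma pattern_None i m : (pattern i m == None) = (m %/ 2 == xy_class i).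
Proof. by case/and4P: (pattern_ok i) => /allP/(_ _ (mem_iota6 m))/eqP. Qed.

Lemma pattern_y_side i m : m %/ 2 != xy_class i -> m %/ 2 != xy_class (ordS i) ->
  y_side (pattern i m) (orient i (+) odd m).
Proof. by case/and4P: (pattern_ok i) => _ /allP/(_ _ (mem_iota6 m))/implyP h _ _ /h/implyP. Qed.

Lemma pattern_x_side i m : m %/ 2 != xy_class i -> m %/ 2 != xy_class (ord_pred i) ->
  x_side (pattern i m) (~~ (orient (ord_pred i) (+) odd m)).
Proof. by case/and4P: (pattern_ok i) => _ _ /allP/(_ _ (mem_iota6 m))/implyP h _ /h/implyP. Qed.

Lemma pattern_glue j m b : y_side (pattern j m) b -> x_side (pattern (ordS j) m) b -> False.
Proof.
move=> yb xb.
have cj : m %/ 2 != xy_class j by rewrite -pattern_None; case: (pattern j m) yb.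
have cSj : m %/ 2 != xy_class (ordS j) by rewrite -pattern_None; case: (pattern (ordS j) m) xb.
have := pattern_y_side cj cSj; have := @pattern_x_side (ordS j) m cSj; rewrite ordSK => /(_ cj).
case: (pattern j m) yb => [[α β]|] //; case: (pattern (ordS j) m) xb => [[α' β']|] //=.
by move=> /eqP-> /eqP-> /eqP-> /eqP; case: (orient j (+) odd m).
Qed.

Lemma card_pattern i t : #|[set m | pattern i m == t]| = type_mult t (a i).
Proof.
case/and4P: (pattern_ok i) => _ _ _ /allP counts.
rewrite card_set_count -(eqP (counts t _)) -?val_enum_ord ?count_map //.
by case: t => [[[] []]|]; rewrite !inE.
Qed.
End Cycle.

(** * The six matchings of the constructed graph *)

Definition tag_a : 'I_3 := @Ordinal 3 0 isT.
Definition tag_b : 'I_3 := @Ordinal 3 1 isT.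
Definition tag_c : 'I_3 := @Ordinal 3 2 isT.

Section Construction.
Local Unset Implicit Arguments.
Variables (n : nat) (V : 'I_n.+3 -> finType) (g : forall i, rel (V i))
  (x y x0 x1 y0 y1 : forall i, V i).
Local Notation k := n.+3.
Hypothesis lab : forall i : 'I_k, labelled_edge (g i) (x i) (y i) (x0 i) (x1 i) (y0 i) (y1 i).
Variables (a : 'I_k -> nat) (q : forall i, 'I_6 -> V i -> V i).
Hypothesis a_lt3 : forall i : 'I_k, a i < 3.
Hypothesis q_cover : forall i : 'I_k, involution_cover (g i) (q i).
Hypothesis q_type : forall (i : 'I_k) (m : 'I_6),
  type_at (x i) (y i) (x1 i) (y1 i) (q i m) = pattern a i m.

Local Notation xb i := (xn (x0 i) (x1 i)).
Local Notation yb i := (yn (y0 i) (y1 i)).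
Local Notation pat := (pattern a).
Local Notation xy_class := (xy_class n).
Local Notation G := (Mgraph g x y x0 x1 y0 y1).
Implicit Types (i j : 'I_k) (m : 'I_6) (b : bool).

Lemma q_inv i m : involutive (q i m). Proof. by case: (q_cover i). Qed.

Lemma q_adj i m w : g i w (q i m w). Proof. by case: (q_cover i). Qed.

Lemma card_q i u w : g i u w -> #|[set m | q i m u == w]| = 2.
Proof. by case: (q_cover i) => _ _; apply. Qed.

Lemma x_sideE j m b : x_side (pat j m) b = (q j m (x j) == xb j b).
Proof. by rewrite -q_type (x_side_type_at (lab j) (@q_adj j m)). Qed.

Lemma y_sideE j m b : y_side (pat j m) b = (q j m (y j) == yb j b).
Proof. by rewrite -q_type (y_side_type_at (lab j) (@q_inv j m) (@q_adj j m)). Qed.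

Definition gadget j (t : 'I_3) : Mvert x y := inl (inr (j, t)).
Definition ab_vertex j b := gadget j (if b then tag_b else tag_a).
Definition c_vertex j := gadget j tag_c.
Definition c_at (j : nat) := c_vertex (inord j).
Definition v_at (r : nat) : Mvert x y := inr (@inord n r).

Definition inner i (w : V i) := (w != x i) && (w != y i).

(* Junk value [ab_vertex i false] for w = x i or w = y i. *)
Definition h_vertex i (w : V i) : Mvert x y :=
  if insub (Tagged V w) : option (Hvert x y) is Some h then inl (inl h) else ab_vertex i false.

Definition partner_H m i (w : V i) : Mvert x y :=
  let u := q i m w in
  if insub (Tagged V u) : option (Hvert x y) is Some h then inl (inl h)
  else if u == x i then ab_vertex (ord_pred i) (w == x1 i) else ab_vertex i (w == y1 i).

Definition ab_out j m b := y_side (pat j m) b || x_side (pat (ordS j) m) b.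

Definition partner_ab m j b : Mvert x y :=
  if y_side (pat j m) b then h_vertex j (yb j b)
  else if x_side (pat (ordS j) m) b then h_vertex (ordS j) (xb (ordS j) b)
  else c_vertex j.

(* The vertices c_j and v_r span a cubic tree, properly edge-coloured with the colours 0, 1, 2:
   the pendant edges c_(r+2) v_r have colour 2, and along the path c_1 v_0 ... v_(k-3) c_0 the
   colours alternate, starting with 0.  Matching m uses the tree edges of colour m %/ 2, and
   the tree edge at c_j gets the colour distinct from xy_class j and xy_class (j + 1). *)
Definition tree_c (c j : nat) : Mvert x y :=
  v_at (if c == 2 then j - 2 else if j == 1 then 0 else k - 3).
Definition path_prev r := if r == 0 then c_at 1 else v_at r.-1.
Definition path_next r := if r.+1 == k - 2 then c_at 0 else v_at r.+1.
Definition tree_v (c r : nat) : Mvert x y :=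
  if c == 2 then c_at r.+2 else if odd r == (c == 1) then path_prev r else path_next r.

Definition partner_c m j : Mvert x y :=
  if ~~ ab_out j m false then ab_vertex j false
  else if ~~ ab_out j m true then ab_vertex j true
  else tree_c (m %/ 2) j.

Definition cover m (u : Mvert x y) : Mvert x y :=
  match u with
  | inl (inl h) => partner_H m (tag (val h)) (tagged (val h))
  | inl (inr (j, t)) =>
      if val t == 0 then partner_ab m j false
      else if val t == 1 then partner_ab m j true else partner_c m j
  | inr r => tree_v (m %/ 2) r
  end.

Lemma h_vertexE i w (hw : inner i w) : h_vertex i w = inl (inl (exist _ (Tagged V w) hw)).
Proof. by rewrite /h_vertex insubT. Qed.

Lemma h_vertex_val (h : Hvert x y) : h_vertex (tag (val h)) (tagged (val h)) = inl (inl h).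
Proof. by case: h => [[i w] hw]; rewrite h_vertexE. Qed.

Lemma h_vertex_eq i u w : inner i u -> inner i w -> (h_vertex i u == h_vertex i w) = (u == w).
Proof.
move=> hu hw; apply/eqP/eqP => [|-> //].
by rewrite (h_vertexE _ _ hu) (h_vertexE _ _ hw) => -[]; apply: eq_from_Tagged.
Qed.

Lemma cover_h m i w : inner i w -> cover m (h_vertex i w) = partner_H m i w.
Proof. by move=> hw; rewrite h_vertexE. Qed.

Lemma cover_ab m j b : cover m (ab_vertex j b) = partner_ab m j b.
Proof. by case: b. Qed.

Lemma cover_c m j : cover m (c_vertex j) = partner_c m j.
Proof. by []. Qed.

Lemma inner_xb i b : inner i (xb i b).
Proof. by rewrite /inner (xn_neq_x (lab i)) (xn_neq_y (lab i)). Qed.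

Lemma inner_yb i b : inner i (yb i b).
Proof. by rewrite /inner (yn_neq_x (lab i)) (yn_neq_y (lab i)). Qed.

Lemma not_inner i w : ~~ inner i w -> (w == x i) || (w == y i).
Proof. by rewrite /inner negb_and !negbK. Qed.

Lemma partner_H_inner m i w : inner i (q i m w) -> partner_H m i w = h_vertex i (q i m w).
Proof. by move=> hq; rewrite /partner_H /h_vertex insubT. Qed.

Lemma partner_H_x m i w : q i m w = x i -> partner_H m i w = ab_vertex (ord_pred i) (w == x1 i).
Proof. by move=> qw; rewrite /partner_H qw insubF /= ?eqxx // /Hpred /= eqxx. Qed.

Lemma partner_H_y m i w : q i m w = y i -> partner_H m i w = ab_vertex i (w == y1 i).
Proof.
move=> qw; rewrite /partner_H qw insubF /=; last by rewrite /Hpred /= eqxx andbF.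
by rewrite eq_sym (negbTE (x_neq_y (lab i))).
Qed.

Lemma ab_out_both j m : ab_out j m false -> ab_out j m true ->
  (m %/ 2 != xy_class j) && (m %/ 2 != xy_class (ordS j)).
Proof.
rewrite -!(pattern_None a_lt3) /ab_out.
by case: (pat j m) => [[? []]|]; case: (pat (ordS j) m) => [[[] ?]|].
Qed.

Lemma ab_out_tree j m : m %/ 2 != xy_class j -> m %/ 2 != xy_class (ordS j) ->
  ab_out j m false && ab_out j m true.
Proof.
rewrite -!(pattern_None a_lt3) /ab_out.
case Ej: (pat j m) => [[α β]|] //; case ESj: (pat (ordS j) m) => [[α' β']|] // _ _.
have : β != α'.
  by apply/eqP => βα'; apply: (@pattern_glue _ _ a_lt3 j m β); rewrite ?Ej ?ESj /= βα'.
by case: (β); case: (α').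
Qed.

Lemma ab_out_false j m : ~~ ab_out j m true -> ab_out j m false.
Proof.
have := pattern_None a_lt3 j m; have := pattern_None a_lt3 (ordS j) m.
have := xy_class_next j; rewrite /ab_out.
case: (pat j m) => [[α β]|]; case: (pat (ordS j) m) => [[α' β']|] //=.
- by case: β; case: α'.
- by case: β.
- by case: α'.
- by move=> ne /esym/eqP cSj /esym/eqP cj; rewrite -cSj -cj eqxx in ne.
Qed.

Lemma v_at_val (r : 'I_n.+1) (s : nat) : s = r -> v_at s = inr r.
Proof. by move=> ->; rewrite /v_at inord_val. Qed.

Lemma c_at_val j (s : nat) : s = j -> c_at s = c_vertex j.
Proof. by move=> ->; rewrite /c_at inord_val. Qed.

Lemma tree_c_spec c j : c < 3 -> c != xy_class j -> c != xy_class (ordS j) ->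
  exists r : 'I_n.+1, tree_c c j = inr r /\ tree_v c r = c_vertex j.
Proof.
rewrite val_ordS; case: j => j hj /=.
have c_atj s : s = j -> c_at s = c_vertex (Ordinal hj) by apply: (c_at_val (Ordinal hj)).
case: c => [|[|[|c]]] // _.
- case: j hj c_atj => [|[|j]] hj c_atj /=.
  + rewrite xy_class0; case odd_n: (odd n) => // _ _.
    exists ord_max; split; first by apply: v_at_val; rewrite /= subSS subSS subn1.
    by rewrite /tree_v /= odd_n /= /path_next eqxx -(c_atj 0).
  + move=> _ _; exists ord0; split; first by apply: v_at_val.
    by rewrite /tree_v /= /path_prev /= -(c_atj 1).
  + rewrite (@xy_class_ge2 n j.+2) //; case: (j.+3 =P k) => [[jn]|_].
      by subst j; rewrite xy_class0 /= negbK; case: (odd n).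
    by rewrite (@xy_class_ge2 n j.+3) //= !negbK; case: (odd j).
- case: j hj c_atj => [|[|j]] hj c_atj /=.
  + rewrite xy_class0; case odd_n: (odd n) => // _ _.
    exists ord_max; split; first by apply: v_at_val; rewrite /= subSS subSS subn1.
    by rewrite /tree_v /= odd_n /= /path_next eqxx -(c_atj 0).
  + by [].
  + rewrite (@xy_class_ge2 n j.+2) //; case: (j.+3 =P k) => [[jn]|_].
      by subst j; rewrite xy_class0 /= negbK; case: (odd n).
    by rewrite (@xy_class_ge2 n j.+3) //= !negbK; case: (odd j).
- case: j hj c_atj => [|[|j]] hj c_atj //= _ _.
  have hr : j < n.+1 by lia.
  exists (Ordinal hr); split; first by apply: v_at_val; rewrite /= ?subSS ?subn0.
  by rewrite /tree_v /= -(c_atj j.+2).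
Qed.

Lemma tree_v_pendant (r : 'I_n.+1) : exists j,
  [/\ tree_v 2 r = c_vertex j, 2 != xy_class j, 2 != xy_class (ordS j) & tree_c 2 j = inr r].
Proof.
case: r => r hr; have hj : r.+2 < k by lia.
exists (Ordinal hj); split.
- by rewrite /tree_v /=; apply: (c_at_val (Ordinal hj)).
- by rewrite /= xy_class_ge2 //; case: (odd _).
- rewrite val_ordS /=.
  by case: ifP => _; [rewrite xy_class0 | rewrite xy_class_ge2 //]; case: (odd _).
- by rewrite /tree_c /=; apply: (v_at_val (Ordinal hr)); rewrite /=; lia.
Qed.

Lemma tree_v_spec c (r : 'I_n.+1) : c < 3 ->
  (exists r' : 'I_n.+1, tree_v c r = inr r' /\ tree_v c r' = inr r) \/
  (exists j, [/\ tree_v c r = c_vertex j, c != xy_class j, c != xy_class (ordS j)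
               & tree_c c j = inr r]).
Proof.
move=> c3; case: (ltnP c 2) => c2; last first.
  have -> : c = 2 by lia.
  by right; apply: tree_v_pendant.
case: r => r hr /=.
have v_atr s : s = r -> v_at s = inr (Ordinal hr) by apply: (v_at_val (Ordinal hr)).
have not2 : (c == 2) = false by apply/negbTE; lia.
rewrite /tree_v not2; case odd_r: (odd r == (c == 1)).
- case: r hr v_atr odd_r => [|r] hr v_atr odd_r.
  + right; have hj : 1 < k by [].
    exists (Ordinal hj); split.
    * by rewrite /path_prev /=; apply: (c_at_val (Ordinal hj)).
    * by rewrite xy_class1; lia.
    * have -> : (Ordinal hj).+1 %% k = 2 by rewrite /= modn_small.
      by rewrite /xy_class /=; move: odd_r c2; case: c {not2 c3} => [|[|]].
    * by rewrite /tree_c not2 /=; apply: v_atr.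
  + left; have hr' : r < n.+1 by lia.
    exists (Ordinal hr'); split; first by rewrite /path_prev /=; apply: (v_at_val (Ordinal hr')).
    rewrite /= ifN_eq; last by move: odd_r => /=; case: (odd r); case: (c == 1).
    by rewrite /path_next ifN_eq; [apply: v_atr | lia].
- case: (r.+1 =P k - 2) => [rn|rn].
  + right; have hj : 0 < k by [].
    exists (Ordinal hj); split.
    * by rewrite /path_next rn eqxx; apply: (c_at_val (Ordinal hj)).
    * rewrite /= xy_class0; move: odd_r; have -> : r = n by lia.
      by case: (odd n); case: c {not2 c3} c2 => [|[|]].
    * have -> : (Ordinal hj).+1 %% k = 1 by rewrite /= modn_small.
      by rewrite xy_class1; lia.
    * by rewrite /tree_c not2 /=; apply: v_atr; lia.
  + left; have hr' : r.+1 < n.+1 by lia.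
    exists (Ordinal hr'); split.
      by rewrite /path_next ifN_eq; [apply: (v_at_val (Ordinal hr')) | apply/eqP].
    rewrite /= ifT; last by move: odd_r => /=; case: (odd r); case: (c == 1).
    by rewrite /path_prev /=; apply: v_atr.
Qed.

Lemma class_lt3 m : m %/ 2 < 3.
Proof. by case: m => [[|[|[|[|[|[|]]]]]]]. Qed.

Lemma gadgetP j (t : 'I_3) :
  [\/ gadget j t = ab_vertex j false, gadget j t = ab_vertex j true | gadget j t = c_vertex j].
Proof.
case: t => [[|[|[|t]]] ht] //; [apply: Or31 | apply: Or32 | apply: Or33];
  by congr gadget; apply: val_inj.
Qed.

Lemma cover_inv_h m i w : inner i w -> cover m (cover m (h_vertex i w)) = h_vertex i w.
Proof.
move=> hw; rewrite cover_h //.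
have [hq|/not_inner/orP[/eqP qx|/eqP qy]] := boolP (inner i (q i m w)).
- by rewrite partner_H_inner // cover_h // partner_H_inner q_inv.
- have qxw : q i m (x i) = w by rewrite -qx q_inv.
  have gxw : g i (x i) w by rewrite -qxw q_adj.
  have [b wb] := adj_xP (lab i) gxw (proj2 (andP hw)).
  rewrite partner_H_x // wb (xn_x1 (lab i)) cover_ab /partner_ab.
  have xs : x_side (pat (ordS (ord_pred i)) m) b by rewrite ord_predK x_sideE qxw wb.
  case: ifP => [ys|_]; first by case: (pattern_glue a_lt3 ys xs).
  by rewrite xs ord_predK.
- have qyw : q i m (y i) = w by rewrite -qy q_inv.
  have gyw : g i (y i) w by rewrite -qyw q_adj.
  have [b wb] := adj_yP (lab i) gyw (proj1 (andP hw)).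
  rewrite partner_H_y // wb (yn_y1 (lab i)) cover_ab /partner_ab.
  by have -> : y_side (pat i m) b by rewrite y_sideE qyw wb.
Qed.

Lemma cover_inv_ab m j b : cover m (cover m (ab_vertex j b)) = ab_vertex j b.
Proof.
rewrite cover_ab /partner_ab; case: ifP => ys.
  rewrite cover_h ?inner_yb // partner_H_y; first by rewrite (yn_y1 (lab j)).
  by move: ys; rewrite y_sideE => /eqP <-; rewrite q_inv.
case: ifP => xs.
  rewrite cover_h ?inner_xb // partner_H_x; first by rewrite ordSK (xn_x1 (lab _)).
  by move: xs; rewrite x_sideE => /eqP <-; rewrite q_inv.
rewrite cover_c /partner_c.
case: b ys xs => ys xs; last by rewrite /ab_out ys xs.
have out0 : ab_out j m false by apply: ab_out_false; rewrite /ab_out ys xs.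
by rewrite out0 /ab_out ys xs.
Qed.

Lemma cover_inv_c m j : cover m (cover m (c_vertex j)) = c_vertex j.
Proof.
rewrite cover_c /partner_c; case: ifP => out0.
  by move: out0; rewrite cover_ab /partner_ab /ab_out negb_or => /andP[/negbTE -> /negbTE ->].
case: ifP => out1.
  by move: out1; rewrite cover_ab /partner_ab /ab_out negb_or => /andP[/negbTE -> /negbTE ->].
have /andP[cj cSj] := ab_out_both j m (negbFE out0) (negbFE out1).
by have [r [-> ?]] := tree_c_spec (m %/ 2) j (class_lt3 m) cj cSj.
Qed.

Lemma cover_inv_v m (r : 'I_n.+1) : cover m (cover m (inr r)) = inr r.
Proof.
change (cover m (tree_v (m %/ 2) r) = inr r).
case: (tree_v_spec (m %/ 2) r (class_lt3 m)) => [[r' [-> //]]|[j [-> cj cSj ?]]].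
by rewrite cover_c /partner_c; have /andP[-> ->] := ab_out_tree j m cj cSj.
Qed.

Lemma cover_involutive m : involutive (cover m).
Proof.
move=> [[h|[j t]]|r]; last exact: cover_inv_v.
  by rewrite -(h_vertex_val h); apply: cover_inv_h; apply: (valP h).
by rewrite -/(gadget j t); case: (gadgetP j t) => ->; rewrite ?cover_inv_ab ?cover_inv_c.
Qed.

Lemma G_sym : symmetric G. Proof. by move=> u w; rewrite /Mgraph orbC. Qed.

Lemma adj_cover_h m i w : inner i w -> G (h_vertex i w) (cover m (h_vertex i w)).
Proof.
move=> hw; rewrite cover_h //.
have [hq|/not_inner/orP[/eqP qx|/eqP qy]] := boolP (inner i (q i m w)).
- rewrite partner_H_inner // /Mgraph (h_vertexE _ _ hw) (h_vertexE _ _ hq) /=.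
  by rewrite eqxx tagged_asE q_adj.
- have gxw : g i (x i) w by rewrite (labelled_edge_sym (lab i)) -qx q_adj.
  have [b wb] := adj_xP (lab i) gxw (proj2 (andP hw)).
  rewrite partner_H_x // wb (xn_x1 (lab i)) /Mgraph (h_vertexE _ _ (inner_xb i b)) /= ord_predK.
  by case: b {wb} => /=; rewrite eqxx ?orbT.
- have gyw : g i (y i) w by rewrite (labelled_edge_sym (lab i)) -qy q_adj.
  have [b wb] := adj_yP (lab i) gyw (proj1 (andP hw)).
  rewrite partner_H_y // wb (yn_y1 (lab i)) /Mgraph (h_vertexE _ _ (inner_yb i b)) /=.
  by case: b {wb} => /=; rewrite eqxx ?orbT.
Qed.

Lemma adj_cover_ab m j b : G (ab_vertex j b) (cover m (ab_vertex j b)).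
Proof.
rewrite cover_ab /partner_ab; case: ifP => ys.
  rewrite G_sym /Mgraph (h_vertexE _ _ (inner_yb j b)) /=.
  by case: b {ys} => /=; rewrite eqxx ?orbT.
case: ifP => xs.
  rewrite G_sym /Mgraph (h_vertexE _ _ (inner_xb _ b)) /=.
  by case: b {ys xs} => /=; rewrite eqxx ?orbT.
by rewrite /Mgraph /=; case: b {ys xs} => /=; rewrite eqxx.
Qed.

Lemma adj_tree_v c (r : 'I_n.+1) : G (inr r) (tree_v c r).
Proof.
case: r => r hr; rewrite /tree_v /=.
case: ifP => _; first by rewrite /Mgraph /c_at /= inordK /=; lia.
case: ifP => _.
  rewrite /path_prev; case: ifP => [/eqP r0|r0]; first by subst r; rewrite /Mgraph /c_at /= inordK.
  by rewrite /Mgraph /v_at /= inordK /=; lia.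
rewrite /path_next; case: ifP => rn; first by rewrite /Mgraph /c_at /= inordK /=; lia.
by rewrite /Mgraph /v_at /= inordK /=; lia.
Qed.

Lemma adj_cover m u : G u (cover m u).
Proof.
case: u => [[h|[j t]]|r]; last exact: adj_tree_v.
  by rewrite -(h_vertex_val h); apply: adj_cover_h; apply: (valP h).
rewrite -/(gadget j t); case: (gadgetP j t) => ->; try exact: adj_cover_ab.
have adj_back u : G (cover m u) (cover m (cover m u)) -> G u (cover m u).
  by rewrite cover_involutive G_sym.
apply: adj_back; rewrite cover_c /partner_c.
case: ifP => _; first exact: adj_cover_ab.
case: ifP => _; first exact: adj_cover_ab.
exact: adj_tree_v.
Qed.

Lemma ab_vertex_eq i j b b' : (ab_vertex i b == ab_vertex j b') = (i == j) && (b == b').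
Proof.
apply/eqP/andP => [[-> tt']|[/eqP-> /eqP->]] //; split=> //.
by case: b b' tt' => [] [] // /(congr1 val).
Qed.

Lemma card_cover_sym u w : #|[set m | cover m u == w]| = #|[set m | cover m w == u]|.
Proof.
by apply: eq_card => m; rewrite !inE; apply/eqP/eqP => <-; rewrite cover_involutive.
Qed.

Lemma card_cover_H i u w : inner i u -> inner i w -> g i u w ->
  #|[set m | cover m (h_vertex i u) == h_vertex i w]| = 2.
Proof.
move=> hu hw guw; apply: etrans _ (card_q i u w guw); apply: eq_card => m.
rewrite !inE cover_h //.
have [hq|hq] := boolP (inner i (q i m u)); first by rewrite partner_H_inner // h_vertex_eq.
have /negbTE-> : q i m u != w by apply: contraNneq hq => ->.
rewrite (h_vertexE _ _ hw).
by case/orP: (not_inner _ _ hq) => /eqP qu; [rewrite partner_H_x | rewrite partner_H_y].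
Qed.

Lemma card_cover_Hy j b : #|[set m | cover m (h_vertex j (yb j b)) == ab_vertex j b]| = 2.
Proof.
have gyb : g j (yb j b) (y j) by rewrite (labelled_edge_sym (lab j)) (adj_yn (lab j)).
apply: etrans _ (card_q j _ _ gyb); apply: eq_card => m; rewrite !inE cover_h ?inner_yb //.
have [hq|/not_inner/orP[/eqP qx|/eqP qy]] := boolP (inner j (q j m (yb j b))).
- by rewrite partner_H_inner // (h_vertexE _ _ hq) (negbTE (proj2 (andP hq))).
- by rewrite partner_H_x // qx (negbTE (x_neq_y (lab j))) ab_vertex_eq (negbTE (ord_pred_neq j)).
- by rewrite partner_H_y // qy (yn_y1 (lab j)) !eqxx.
Qed.

Lemma card_cover_Hx j b :
  #|[set m | cover m (h_vertex (ordS j) (xb (ordS j) b)) == ab_vertex j b]| = 2.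
Proof.
set i := ordS j.
have gxb : g i (xb i b) (x i) by rewrite (labelled_edge_sym (lab i)) (adj_xn (lab i)).
apply: etrans _ (card_q i _ _ gxb); apply: eq_card => m; rewrite !inE cover_h ?inner_xb //.
have [hq|/not_inner/orP[/eqP qx|/eqP qy]] := boolP (inner i (q i m (xb i b))).
- by rewrite partner_H_inner // (h_vertexE _ _ hq) (negbTE (proj1 (andP hq))).
- by rewrite partner_H_x // qx /i ordSK (xn_x1 (lab _)) !eqxx.
rewrite partner_H_y // qy ab_vertex_eq (negbTE (ordS_neq j)).
by rewrite /= eq_sym (negbTE (x_neq_y (lab i))).
Qed.

Lemma card_cover_abc j b : #|[set m | cover m (ab_vertex j b) == c_vertex j]| = 2.
Proof.
set Y := [set m | y_side (pat j m) b]; set X := [set m | x_side (pat (ordS j) m) b].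
have -> : [set m | cover m (ab_vertex j b) == c_vertex j] = ~: (Y :|: X).
  apply/setP => m; rewrite !inE cover_ab /partner_ab negb_or.
  case: ifP => ys /=; first by rewrite (h_vertexE _ _ (inner_yb j b)).
  case: ifP => xs /=; first by rewrite (h_vertexE _ _ (inner_xb _ b)).
  by rewrite eqxx.
have card_Y : #|Y| = 2.
  by apply: etrans _ (card_q j _ _ (adj_yn (lab j) b)); apply: eq_card => m; rewrite !inE y_sideE.
have card_X : #|X| = 2.
  by apply: etrans _ (card_q _ _ _ (adj_xn (lab _) b)); apply: eq_card => m; rewrite !inE x_sideE.
have disjYX : Y :&: X = set0.
  by apply/setP => m; rewrite !inE; apply/negbTE/negP => /andP[]; apply: pattern_glue.
by have := cardsC (Y :|: X); rewrite card_ord cardsU disjYX cards0 card_Y card_X; lia.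
Qed.

Lemma card_class c : c < 3 -> #|[set m : 'I_6 | m %/ 2 == c]| = 2.
Proof.
rewrite card_set_count (_ : count _ _ = count (fun r => r %/ 2 == c) (iota 0 6)).
  by case: c => [|[|[|]]].
by rewrite -val_enum_ord count_map.
Qed.

Lemma c_at_eq (r s : nat) : r < k -> s < k -> (c_at r == c_at s) = (r == s).
Proof. by move=> rk sk; apply/eqP/eqP => [[/(congr1 (@nat_of_ord _))]|->] //; rewrite !inordK. Qed.

Lemma v_at_eq r s : r < n.+1 -> s < n.+1 -> (v_at r == v_at s) = (r == s).
Proof. by move=> rn sn; apply/eqP/eqP => [[/(congr1 (@nat_of_ord _))]|->] //; rewrite !inordK. Qed.

Lemma tree_nbrs_uniq (r : 'I_n.+1) :
  [/\ path_prev r != path_next r, path_prev r != c_at r.+2 & path_next r != c_at r.+2].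
Proof.
case: r => r hr /=; rewrite /path_prev /path_next.
case: ifP => [/eqP r0|r0]; case: ifP => [/eqP rn|rn];
  by split => //; rewrite ?c_at_eq ?v_at_eq //; lia.
Qed.

Lemma card_cover_tree (r : 'I_n.+1) t c0 : c0 < 3 ->
  (forall c, c < 3 -> (tree_v c r == t) = (c == c0)) -> #|[set m | cover m (inr r) == t]| = 2.
Proof.
move=> c03 tree_t; apply: etrans _ (card_class c0 c03); apply: eq_card => m; rewrite !inE.
exact: tree_t (class_lt3 m).
Qed.

Lemma card_cover_pendant (r : 'I_n.+1) : #|[set m | cover m (inr r) == c_at r.+2]| = 2.
Proof.
apply: (card_cover_tree r _ 2) => // c c3; case: (tree_nbrs_uniq r) => _ d2 d3.
rewrite /tree_v; case: c c3 => [|[|[|]]] // _ /=; rewrite ?eqxx //; case: ifP => _;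
  by rewrite ?(negbTE d2) ?(negbTE d3).
Qed.

Lemma card_cover_prev (r : 'I_n.+1) : #|[set m | cover m (inr r) == path_prev r]| = 2.
Proof.
apply: (card_cover_tree r _ (if odd r then 1 else 0)); first by case: (odd r).
move=> c c3; case: (tree_nbrs_uniq r) => d1 d2 _.
rewrite /tree_v; case: c c3 => [|[|[|]]] // _ /=; case: (odd r) => /=;
  by rewrite ?eqxx // eq_sym ?(negbTE d1) ?(negbTE d2).
Qed.

Lemma card_cover_next (r : 'I_n.+1) : #|[set m | cover m (inr r) == path_next r]| = 2.
Proof.
apply: (card_cover_tree r _ (if odd r then 0 else 1)); first by case: (odd r).
move=> c c3; case: (tree_nbrs_uniq r) => d1 _ d3.
rewrite /tree_v; case: c c3 => [|[|[|]]] // _ /=; case: (odd r) => /=;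
  by rewrite ?eqxx // ?(negbTE d1) // eq_sym ?(negbTE d3).
Qed.

Lemma card_cover_Hab i w (hw : inner i w) j b :
  (Tagged V w == Tagged V (yb j b)) || (Tagged V w == Tagged V (xb (ordS j) b)) ->
  #|[set m | cover m (h_vertex i w) == ab_vertex j b]| = 2.
Proof.
case/orP => /eqP wE; have ij := congr1 tag wE; simpl in ij; subst i.
  by rewrite (eq_from_Tagged wE); apply: card_cover_Hy.
by rewrite (eq_from_Tagged wE); apply: card_cover_Hx.
Qed.

Lemma card_cover_base u w : Mbase g x0 x1 y0 y1 u w -> #|[set m | cover m u == w]| = 2.
Proof.
case: u w => [[h|[j t]]|r] [[h'|[j' t']]|r'] uw; simpl in uw => //.
- rewrite -(h_vertex_val h) -(h_vertex_val h').
  case: h h' uw => [[i u] hu] [[i' w] hw] /= /andP[/eqP ii' guw]; subst i'.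
  by rewrite tagged_asE in guw; apply: card_cover_H.
- rewrite -(h_vertex_val h) -/(gadget j' t'); case: h uw => [[i u] hu] /=.
  case/orP => /andP[/eqP t'_a uE].
    have -> : gadget j' t' = ab_vertex j' false by congr gadget; apply: val_inj.
    exact: card_cover_Hab.
  have -> : gadget j' t' = ab_vertex j' true by congr gadget; apply: val_inj.
  exact: card_cover_Hab.
- rewrite -/(gadget j t) -/(gadget j' t'); move: uw; rewrite orbF.
  case/orP => /andP[/andP[/eqP <- /eqP t_ab] /eqP t'_c].
    have -> : gadget j t = ab_vertex j false by congr gadget; apply: val_inj.
    have -> : gadget j t' = c_vertex j by congr gadget; apply: val_inj.
    exact: card_cover_abc.
  have -> : gadget j t = ab_vertex j true by congr gadget; apply: val_inj.
  have -> : gadget j t' = c_vertex j by congr gadget; apply: val_inj.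
  exact: card_cover_abc.
- case/andP: uw => /eqP t_c jr; rewrite card_cover_sym.
  have -> : inl (inr (j, t)) = c_vertex j by congr (inl (inr (j, _))); apply: val_inj.
  case/or3P: jr => /andP[/eqP jv /eqP rv].
  + have -> : c_vertex j = path_prev r'.
      by rewrite /path_prev rv /=; apply/esym/c_at_val; rewrite jv.
    exact: card_cover_prev.
  + have -> : c_vertex j = path_next r'.
      by rewrite /path_next rv ifT; [apply/esym/c_at_val; rewrite jv | apply/eqP; lia].
    exact: card_cover_next.
  + have -> : c_vertex j = c_at r'.+2 by apply/esym/c_at_val; rewrite rv; lia.
    exact: card_cover_pendant.
- have -> : inr r' = path_next r.
    rewrite /path_next ifF; first by apply/esym/v_at_val/eqP.
    by apply/eqP; move: (ltn_ord r'); move/eqP: uw; lia.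
  exact: card_cover_next.
Qed.

Lemma card_cover u w : G u w -> #|[set m | cover m u == w]| = 2.
Proof. by case/orP => /card_cover_base //; rewrite card_cover_sym. Qed.

Lemma G_irr : irreflexive G.
Proof.
move=> [[h|[j t]]|r]; rewrite /Mgraph orbb //=.
- by case: h => [[i w] hw] /=; rewrite eqxx tagged_asE (labelled_edge_irr (lab i)).
- by rewrite eqxx /=; case: t => [[|[|[|]]] ?].
- by apply/negbTE/eqP; lia.
Qed.

Lemma construction_cover : has_fulkerson_cover G.
Proof.
apply/(has_fulkerson_coverP G_sym G_irr); exists cover; split.
- exact: cover_involutive.
- exact: adj_cover.
- exact: card_cover.
Qed.
End Construction.

Theorem theorem1p3 (k : nat) (V : 'I_k -> finType) (g : forall i, rel (V i))
  (x y x0 x1 y0 y1 : forall i, V i) :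
  3 <= k ->
  (forall i, simple_graph (g i)) ->
  (forall i, cubic (g i)) ->
  (forall i, bridgeless (g i)) ->
  (forall i, cyclically_4_edge_connected (g i)) ->
  (forall i, has_fulkerson_cover (g i)) ->
  (* x_i y_i is an edge; x_i^0, x_i^1 are the neighbours of x_i other than y_i *)
  (forall i, [set w | g i (x i) w] = [set y i; x0 i; x1 i]) ->
  (* y_i^0, y_i^1 are the neighbours of y_i other than x_i *)
  (forall i, [set w | g i (y i) w] = [set x i; y0 i; y1 i]) ->
  has_fulkerson_cover (Mgraph g x y x0 x1 y0 y1).
Proof.
case: k V g x y x0 x1 y0 y1 => [|[|[|n]]] // V g x y x0 x1 y0 y1 _.
move=> simple cubic _ _ covered Nx Ny.
have lab i := labelled_edge_of (simple i) (cubic i) (Nx i) (Ny i).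
have [P P_cover] := fin_all_exists (fun i =>
  iffLR (has_fulkerson_coverP (labelled_edge_sym (lab i)) (labelled_edge_irr (lab i))) (covered i)).
pose a i := mult00 (x i) (y i) (x1 i) (y1 i) (P i).
have a_lt3 i : a i < 3 by case: (card_type_at (lab i) (P_cover i) None).
have relabel i : exists s : 'S_6,
    forall m, type_at (x i) (y i) (x1 i) (y1 i) (P i (s m)) = pattern a i m.
  apply: (perm_of_fibres (f := fun m => type_at (x i) (y i) (x1 i) (y1 i) (P i m))) => t.
  by rewrite (card_pattern a_lt3); case: (card_type_at (lab i) (P_cover i) t).
have [s s_type] := fin_all_exists relabel.
exact: (construction_cover n V g x y x0 x1 y0 y1 lab a _ a_lt3
  (fun i => involution_cover_perm (s i) (P_cover i)) s_type).
Qed.
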